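(* Let $P$ and $C$ be causal stable systems on $\mathcal{L}_{2e+}^n$ such that the feedback system $P\#C$ is well-posed. If $\theta_e(P)+\theta_e(C)<\pi$, then $P\#C|_{e_2=0}$ is stable.
   Context: $\mathcal{L}_2^n$: measurable $u:\mathbb{R}\to\mathbb{R}^n$ with $\|u\|_2^2=\int|u(t)|^2dt<\infty$, inner product $\langle u,v\rangle=\int u(t)^Tv(t)\,dt$; $\mathcal{L}_{2+}=\{u\in\mathcal{L}_2:u(t)=0\ \text{for}\ t<0\}$. For $T\ge0$, $(\Gamma_Tu)(t)=u(t)$ for $t\le T$, $0$ for $t>T$, $u_T=\Gamma_Tu$; $\mathcal{L}_{2e+}=\{u:u_T\in\mathcal{L}_{2+}\ \forall T\ge0\}$. A system is an operator $P:\mathcal{L}_{2e+}\to\mathcal{L}_{2e+}$ with $P0=0$, $P\ne0$; causal if $\Gamma_TP=\Gamma_TP\Gamma_T$ for all $T\ge0$; a causal system is stable if $Pu\in\mathcal{L}_{2+}$ for all $u\in\mathcal{L}_{2+}$ and $\sup_{0\ne u\in\mathcal{L}_{2+}}\|Pu\|_2/\|u\|_2<\infty$. The $\mathcal{L}_{2e}$ singular angle $\theta_e(P)\in[0,\pi]$ is given by $\cos\theta_e(P)=\inf\{\langle u_T,(Pu)_T\rangle/(\|u_T\|_2\|(Pu)_T\|_2): u\in\mathcal{L}_{2e+},\ T>0,\ \|u_T\|_2\ne0,\ \|(Pu)_T\|_2\ne0\}$. The feedback system $P\#C$: $u_1=e_1-y_2$, $u_2=e_2+y_1$, $y_1=Pu_1$,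 $y_2=Cu_2$; well-posed if $(u_1,u_2)\mapsto(u_1+Cu_2,\ u_2-Pu_1)$ has a causal inverse on $\mathcal{L}_{2e+}\times\mathcal{L}_{2e+}$. $P\#C|_{e_2=0}$ is the loop with $e_2=0$; it is stable if there is $c>0$ with $\|\Gamma_T(u_1,u_2)\|_2\le c\|\Gamma_Te\|_2$ for all $T\ge0$ and all $e=(e_1,0)$, $e_1\in\mathcal{L}_{2e+}$. *)

From HB Require Import structures.
From mathcomp Require Import all_boot all_order all_algebra.
From mathcomp Require Import all_classical all_reals all_analysis.
Set Implicit Arguments. Unset Strict Implicit. Unset Printing Implicit Defensive.
Import Order.TTheory GRing.Theory Num.Theory.
Import numFieldNormedType.Exports.
Local Open Scope classical_set_scope.
Local Open Scope ring_scope.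

Section Signals.
Variables (R : realType) (n : nat).

Definition signal := R -> 'rV[R]_n.

Local Notation mu := (@lebesgue_measure R).

Definition vsq (x : 'rV[R]_n) : R := \sum_(i < n) x ord0 i ^+ 2.
Definition vdot (x y : 'rV[R]_n) : R := \sum_(i < n) x ord0 i * y ord0 i.

(* a.e. equality of signals: equality in L2 / L2e (elements are classes) *)
Definition aeeq (u v : signal) : Prop := {ae mu, forall t, u t = v t}.

Definition L2 (u : signal) : Prop :=
  (forall i : 'I_n, measurable_fun setT (fun t => u t ord0 i)) /\
  mu.-integrable setT (fun t => (vsq (u t))%:E).

Definition l2norm (u : signal) : R := Num.sqrt (Rintegral mu setT (fun t => vsq (u t))).
Definition l2inner (u v : signal) : R := Rintegral mu setT (fun t => vdot (u t) (v t)).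

Definition L2p (u : signal) : Prop :=
  L2 u /\ {ae mu, forall t, t < 0 -> u t = 0}.

Definition trunc (T : R) (u : signal) : signal :=
  fun t => if t <= T then u t else 0.

Definition L2ep (u : signal) : Prop := forall T, 0 <= T -> L2p (trunc T u).

(* operators act on L2e+, whose elements are a.e.-classes: they must be
   compatible with a.e. equality *)
Definition respects_ae (P : signal -> signal) : Prop :=
  forall u v, L2ep u -> L2ep v -> aeeq u v -> aeeq (P u) (P v).

Definition is_system (P : signal -> signal) : Prop :=
  [/\ respects_ae P,
      (forall u, L2ep u -> L2ep (P u)),
      aeeq (P (fun _ => 0)) (fun _ => 0) &
      exists u, L2ep u /\ ~ aeeq (P u) (fun _ => 0)].

Definition causal (P : signal -> signal) : Prop :=
  forall T u, 0 <= T -> L2ep u -> aeeq (trunc T (P u)) (trunc T (P (trunc T u))).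

Definition stable (P : signal -> signal) : Prop :=
  (forall u, L2p u -> L2p (P u)) /\
  exists c : R, forall u, L2p u -> l2norm u != 0 -> l2norm (P u) / l2norm u <= c.

Definition cos_theta_e (P : signal -> signal) : R :=
  inf [set r | exists u T, [/\ L2ep u, 0 < T, l2norm (trunc T u) != 0,
                               l2norm (trunc T (P u)) != 0 &
       r = l2inner (trunc T u) (trunc T (P u)) /
           (l2norm (trunc T u) * l2norm (trunc T (P u)))]].
Definition theta_e (P : signal -> signal) : R := acos (cos_theta_e P).

Definition psignal := (signal * signal)%type.
Definition paeeq (x y : psignal) : Prop := aeeq x.1 y.1 /\ aeeq x.2 y.2.
Definition pL2ep (x : psignal) : Prop := L2ep x.1 /\ L2ep x.2.
Definition ptrunc (T : R) (x : psignal) : psignal := (trunc T x.1, trunc T x.2).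

Definition fb_map (P C : signal -> signal) (x : psignal) : psignal :=
  (fun t => x.1 t + C x.2 t, fun t => x.2 t - P x.1 t).

Definition well_posed (P C : signal -> signal) : Prop :=
  exists F : psignal -> psignal,
    [/\ (forall x, pL2ep x -> pL2ep (F x)),
        (forall x y, pL2ep x -> pL2ep y -> paeeq x y -> paeeq (F x) (F y)),
        (forall x, pL2ep x -> paeeq (F (fb_map P C x)) x),
        (forall x, pL2ep x -> paeeq (fb_map P C (F x)) x) &
        (forall T x, 0 <= T -> pL2ep x -> paeeq (ptrunc T (F x)) (ptrunc T (F (ptrunc T x))))].

(* stability of P#C restricted to e2 = 0: for every e1 in L2e+ and the
   resulting loop signals u1 = e1 - C u2, u2 = P u1 (e2 = 0),
   ||Gamma_T (u1,u2)|| <= c ||Gamma_T (e1,0)|| for all T >= 0 *)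
Definition loop_e2_0_stable (P C : signal -> signal) : Prop :=
  exists2 c : R, 0 < c &
    forall e1 u1 u2 T, L2ep e1 -> L2ep u1 -> L2ep u2 -> 0 <= T ->
      aeeq u1 (fun t => e1 t - C u2 t) -> aeeq u2 (P u1) ->
      Num.sqrt (l2norm (trunc T u1) ^+ 2 + l2norm (trunc T u2) ^+ 2)
        <= c * l2norm (trunc T e1).

End Signals.

From HB Require Import structures.
From mathcomp Require Import all_boot all_order all_algebra.
From mathcomp Require Import all_classical all_reals all_analysis.
From mathcomp Require Import ring lra.
Import Order.TTheory GRing.Theory Num.Theory.
Import numFieldNormedType.Exports.
Local Open Scope classical_set_scope.
Local Open Scope ring_scope.

(* Write a, b, c, e for the truncations at T of u1, u2, C u2 and e1, so that a = e - c and
   b = Gamma_T (P u1) almost everywhere, and let p, q be the cosines of the two angles.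
   The angle bounds p |a| |b| <= <a, b> and q |b| |c| <= <b, c> add up to
   (p |a| + q |c|) |b| <= <e, b> <= |e| |b|, hence p |a| + q |c| <= |e| (if |b| = 0 then
   c = 0 by causality of C). Together with | |a| - |c| | <= |e| and |q| <= 1 this gives
   (p + q) |a| <= 2 |e|, and p + q > 0 is exactly the hypothesis on the angles. Finally
   |b| <= k |a| by causality and stability of P. *)

Section RealInequalities.
Context {R : realFieldType}.

Lemma sqr_le_mul_of_quadratic (a b x : R) : 0 <= a ->
  (forall l, l *+ 2 * x <= l ^+ 2 * a + b) -> x ^+ 2 <= a * b.
Proof.
move=> a_ge0 quad; have [a0 | a_neq0] := eqVneq a 0.
  rewrite a0 mul0r; have [-> | x_neq0] := eqVneq x 0; first by rewrite expr0n.
  have := quad 0; have := quad ((b + 1) / x).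
  rewrite mulrnAl divfK // a0 !mulr0 !add0r mul0rn mul0r; lra.
have a_gt0 : 0 < a by rewrite lt_neqAle eq_sym a_neq0.
pose l := x / a; have xE : x = l * a by rewrite divfK.
have := quad l; rewrite xE; nra.
Qed.

Lemma mul_le_add_dist {q a c e : R} : `|q| <= 1 -> `|a - c| <= e -> q * a <= q * c + e.
Proof.
move=> q_le1 ac_le; rewrite -lerBlDl -mulrBr; apply: le_trans (ler_norm _) _.
by rewrite normrM -[e]mul1r ler_pM.
Qed.

End RealInequalities.

Lemma sqrt_sqrD_le {R : rcfType} {a b : R} : 0 <= a -> 0 <= b ->
  Num.sqrt (a ^+ 2 + b ^+ 2) <= a + b.
Proof.
move=> a_ge0 b_ge0; rewrite -(ger0_norm (addr_ge0 a_ge0 b_ge0)) -sqrtr_sqr.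
rewrite ler_sqrt ?sqr_ge0 //; nra.
Qed.

Section VectorAlgebra.
Context {R : realType} {n : nat}.
Implicit Types x y z : 'rV[R]_n.

Lemma vsq_ge0 x : 0 <= vsq x.
Proof. by apply: sumr_ge0 => i _; exact: sqr_ge0. Qed.

Lemma vsq0 : vsq (0 : 'rV[R]_n) = 0.
Proof. by rewrite /vsq big1 // => i _; rewrite mxE expr0n. Qed.

Lemma vsq_eq0 x : vsq x = 0 -> x = 0.
Proof.
move/eqP; rewrite psumr_eq0 => [/allP x0|i _]; last exact: sqr_ge0.
apply/rowP => j; rewrite mxE; apply/eqP; rewrite -sqrf_eq0.
exact: x0 (mem_index_enum _).
Qed.

Lemma vdotC x y : vdot x y = vdot y x.
Proof. by apply: eq_bigr => i _; rewrite mulrC. Qed.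

Lemma vdotBl x y z : vdot (x - y) z = vdot x z - vdot y z.
Proof. by rewrite /vdot -sumrB; apply: eq_bigr => i _; rewrite !mxE mulrBl. Qed.

Lemma vsqB x y : vsq (x - y) = vsq x + vsq y - vdot x y *+ 2.
Proof.
rewrite /vsq /vdot -sumrMnl -big_split -sumrB /=.
by apply: eq_bigr => i _; rewrite !mxE; ring.
Qed.

Lemma vdot_quadratic_le (l : R) x y : l *+ 2 * vdot x y <= l ^+ 2 * vsq x + vsq y.
Proof.
rewrite /vdot /vsq !mulr_sumr -big_split /=; apply: ler_sum => i _.
by have := sqr_ge0 (l * x ord0 i - y ord0 i); nra.
Qed.

Lemma ler_norm_vdot x y : `|vdot x y| <= vsq x + vsq y.
Proof.
have := vdot_quadratic_le 1 x y; have := vdot_quadratic_le (-1) x y.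
rewrite sqrrN expr1n !mul1r mulNrn mulNr => le1 le2.
have := vsq_ge0 x; have := vsq_ge0 y; rewrite ler_norml; lra.
Qed.

End VectorAlgebra.

Section L2Signals.
Context {R : realType} {n : nat}.
Local Notation mu := (@lebesgue_measure R).
Implicit Types u v w : signal R n.

Definition measurable_signal u :=
  forall i : 'I_n, measurable_fun setT (fun t => u t ord0 i).

Lemma L2_measurable {u} : L2 u -> measurable_signal u.
Proof. by case. Qed.

Lemma measurable_signalB {u v} :
  measurable_signal u -> measurable_signal v -> measurable_signal (u \- v).
Proof.
move=> meas_u meas_v i; rewrite (_ : (fun t => _) = (fun t => u t ord0 i - v t ord0 i)).
  exact: measurable_realfun.measurable_funB.
by apply/funext => t; rewrite !mxE.
Qed.

Lemma measurable_vdot u v : measurable_signal u -> measurable_signal v ->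
  measurable_fun setT (fun t => vdot (u t) (v t)).
Proof.
by move=> meas_u meas_v; apply: measurable_sum => i; exact: measurable_realfun.measurable_funM.
Qed.

Lemma measurable_vsq u : measurable_signal u -> measurable_fun setT (fun t => vsq (u t)).
Proof.
by move=> meas_u; apply: measurable_sum => i; exact: measurable_realfun.measurable_funX.
Qed.

Lemma integrableZl_EFin (k : R) {f : R -> R} : mu.-integrable setT (EFin \o f) ->
  mu.-integrable setT (EFin \o (fun t => k * f t)).
Proof. exact: integrableZl. Qed.

Lemma integrableD_EFin {f g : R -> R} : mu.-integrable setT (EFin \o f) ->
  mu.-integrable setT (EFin \o g) -> mu.-integrable setT (EFin \o (fun t => f t + g t)).
Proof. exact: integrableD. Qed.

Lemma integrable_vsq {u} : L2 u -> mu.-integrable setT (EFin \o (fun t => vsq (u t))).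
Proof. by case. Qed.

Lemma integrable_vdot {u v} : L2 u -> L2 v ->
  mu.-integrable setT (EFin \o (fun t => vdot (u t) (v t))).
Proof.
move=> Lu Lv; have iu := integrable_vsq Lu; have iv := integrable_vsq Lv.
have iuv : mu.-integrable setT (EFin \o (fun t => vsq (u t) + vsq (v t))).
  exact: integrableD_EFin.
apply: (@le_integrable _ _ _ mu _ measurableT _ _ _ _ iuv).
  by apply/measurable_realfun.measurable_EFinP; apply: measurable_vdot; exact: L2_measurable.
move=> t _ /=; rewrite lee_fin (ger0_norm (addr_ge0 (vsq_ge0 _) (vsq_ge0 _))).
exact: ler_norm_vdot.
Qed.

Lemma Rintegral_vsq_ge0 u : 0 <= \int[mu]_(t in setT) vsq (u t).
Proof. by apply: Rintegral_ge0 => t _; exact: vsq_ge0. Qed.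

Lemma l2norm_ge0 u : 0 <= l2norm u.
Proof. exact: sqrtr_ge0. Qed.

Lemma l2norm_sqr u : l2norm u ^+ 2 = \int[mu]_(t in setT) vsq (u t).
Proof. by rewrite sqr_sqrtr // Rintegral_vsq_ge0. Qed.

Lemma L2_cst0 : L2 (cst 0 : signal R n).
Proof.
split=> [i|].
  rewrite (_ : (fun t => _) = cst 0); first exact: measurable_cst.
  by apply/funext => t; rewrite mxE.
rewrite (_ : (fun t => _) = cst 0%E); first exact: integrable0.
by apply/funext => t; rewrite /= vsq0.
Qed.

Lemma l2norm_cst0 : l2norm (cst 0 : signal R n) = 0.
Proof. by rewrite /l2norm /= vsq0 Rintegral_cst // mul0r sqrtr0. Qed.

Lemma l2innerC u v : l2inner u v = l2inner v u.
Proof. by apply: eq_Rintegral => t _; rewrite vdotC. Qed.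

Lemma l2innerBl {u v w} : L2 u -> L2 v -> L2 w ->
  l2inner (u \- v) w = l2inner u w - l2inner v w.
Proof.
move=> Lu Lv Lw; rewrite /l2inner -RintegralB //; try exact: integrable_vdot.
by apply: eq_Rintegral => t _; rewrite vdotBl.
Qed.

Lemma l2_CauchySchwarz {u v} : L2 u -> L2 v -> `|l2inner u v| <= l2norm u * l2norm v.
Proof.
move=> Lu Lv; rewrite -sqrtrM ?Rintegral_vsq_ge0 // -sqrtr_sqr ler_sqrt; last first.
  by rewrite mulr_ge0 ?Rintegral_vsq_ge0.
apply: sqr_le_mul_of_quadratic => [|l]; first exact: Rintegral_vsq_ge0.
have iuv := integrable_vdot Lu Lv; have iu := integrable_vsq Lu; have iv := integrable_vsq Lv.
have quadE : \int[mu]_(t in setT) (l ^+ 2 * vsq (u t) + vsq (v t)) =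
    l ^+ 2 * \int[mu]_(t in setT) vsq (u t) + \int[mu]_(t in setT) vsq (v t).
  by rewrite RintegralD ?RintegralZl //; exact: integrableZl_EFin.
rewrite -quadE /l2inner -RintegralZl //.
apply: le_Rintegral => //; first exact: integrableZl_EFin.
  by apply: integrableD_EFin => //; exact: integrableZl_EFin.
by move=> t _; exact: vdot_quadratic_le.
Qed.

Lemma l2normB_le {u v} : L2 u -> L2 v -> l2norm (u \- v) <= l2norm u + l2norm v.
Proof.
move=> Lu Lv; rewrite -(ger0_norm (addr_ge0 (l2norm_ge0 u) (l2norm_ge0 v))).
rewrite -sqrtr_sqr ler_sqrt ?sqr_ge0 //.
have iuv := integrable_vdot Lu Lv; have iu := integrable_vsq Lu; have iv := integrable_vsq Lv.
have -> : \int[mu]_(t in setT) vsq ((u \- v) t) =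
    l2norm u ^+ 2 + l2norm v ^+ 2 - 2 * l2inner u v.
  transitivity (\int[mu]_(t in setT) (vsq (u t) + vsq (v t) - 2 * vdot (u t) (v t))).
    by apply: eq_Rintegral => t _; rewrite vsqB mulr_natl.
  rewrite RintegralB ?RintegralD ?RintegralZl ?l2norm_sqr //.
  - exact: integrableD_EFin.
  - exact: integrableZl_EFin.
have := l2_CauchySchwarz Lu Lv; rewrite ler_norml => /andP[+ _].
have := l2norm_ge0 u; have := l2norm_ge0 v; nra.
Qed.

End L2Signals.

Section AlmostEverywhere.
Context {R : realType} {n : nat}.
Local Notation mu := (@lebesgue_measure R).
Implicit Types u v w : signal R n.

Lemma aeS (A B : R -> Prop) : (forall t, A t -> B t) ->
  {ae mu, forall t, A t} -> {ae mu, forall t, B t}.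
Proof. by move=> AB; apply: filterS => //; exact: (ae_filter_ringOfSetsType mu). Qed.

Lemma aeS2 (A B C : R -> Prop) : (forall t, A t -> B t -> C t) ->
  {ae mu, forall t, A t} -> {ae mu, forall t, B t} -> {ae mu, forall t, C t}.
Proof. by move=> ABC; apply: filterS2 => //; exact: (ae_filter_ringOfSetsType mu). Qed.

Lemma aeeq_refl u : aeeq u u.
Proof. exact: aeW. Qed.

Lemma aeeq_trans u v w : aeeq u v -> aeeq v w -> aeeq u w.
Proof. by apply: aeS2 => t -> ->. Qed.

Lemma Rintegral_ae (f g : R -> R) : measurable_fun setT f -> measurable_fun setT g ->
  {ae mu, forall t, f t = g t} -> \int[mu]_(t in setT) f t = \int[mu]_(t in setT) g t.
Proof.
move=> mf mg fg; congr fine; apply: ae_eq_integral => //.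
- exact/measurable_realfun.measurable_EFinP.
- exact/measurable_realfun.measurable_EFinP.
- by apply: aeS fg => t /= ->.
Qed.

Lemma eq_l2inner_ae {u u' v v'} : aeeq u u' -> aeeq v v' ->
  measurable_signal u -> measurable_signal u' -> measurable_signal v -> measurable_signal v' ->
  l2inner u v = l2inner u' v'.
Proof.
move=> uu' vv' meas_u meas_u' meas_v meas_v'; apply: Rintegral_ae; try exact: measurable_vdot.
by apply: aeS2 uu' vv' => t -> ->.
Qed.

Lemma eq_l2norm_ae {u u'} : aeeq u u' ->
  measurable_signal u -> measurable_signal u' -> l2norm u = l2norm u'.
Proof.
move=> uu' meas_u meas_u'; congr Num.sqrt; apply: Rintegral_ae; try exact: measurable_vsq.
by apply: aeS uu' => t ->.
Qed.

Lemma l2norm_aeeq0 u : measurable_signal u -> aeeq u (cst 0) -> l2norm u = 0.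
Proof.
by move=> meas_u u0; rewrite -[RHS](@l2norm_cst0 R n) (eq_l2norm_ae u0).
Qed.

Lemma l2norm_eq0_ae {u} : L2 u -> l2norm u = 0 -> aeeq u (cst 0).
Proof.
move=> Lu /eqP; rewrite sqrtr_eq0 => int_le0.
have int0 : \int[mu]_(t in setT) vsq (u t) = 0.
  by apply/eqP; rewrite eq_le int_le0 Rintegral_vsq_ge0.
have : ae_eq mu setT (EFin \o (fun t => vsq (u t))) (cst 0%E).
  apply: (iffLR (ae_eq_integral_abs mu measurableT _)).
    by apply/measurable_realfun.measurable_EFinP; apply: measurable_vsq; exact: L2_measurable.
  under eq_integral do rewrite gee0_abs ?lee_fin ?vsq_ge0 //.
  rewrite -(fineK (integrable_fin_num _ (integrable_vsq Lu))) //.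
  by move: int0; rewrite /Rintegral => ->.
by apply: aeS => t /(_ I) [] /vsq_eq0.
Qed.

End AlmostEverywhere.

Section Truncation.
Context {R : realType} {n : nat}.
Local Notation mu := (@lebesgue_measure R).
Implicit Types u v : signal R n.

Lemma trunc_aeeq T {u v} : aeeq u v -> aeeq (trunc T u) (trunc T v).
Proof. by apply: aeS => t; rewrite /trunc => ->. Qed.

Lemma truncB T u v : trunc T (u \- v) = trunc T u \- trunc T v.
Proof. by apply/funext => t; rewrite /trunc /=; case: (t <= T); rewrite ?subr0. Qed.

Lemma trunc_cst0 T : trunc T (cst 0) = cst 0 :> signal R n.
Proof. by apply/funext => t; rewrite /trunc; case: ifP. Qed.

Lemma trunc_trunc T T' u : trunc T' (trunc T u) = trunc (Order.min T T') u.
Proof. by apply/funext => t; rewrite /trunc le_min; do 2 case: (_ <= _). Qed.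

Lemma L2_trunc {u T} : L2ep u -> 0 <= T -> L2 (trunc T u).
Proof. by move=> Lu T0; case: (Lu T T0). Qed.

Lemma L2ep_trunc {u T} : L2ep u -> 0 <= T -> L2ep (trunc T u).
Proof. by move=> Lu T0 T' T'0; rewrite trunc_trunc; apply: Lu; rewrite le_min T0. Qed.

Lemma L2ep_cst0 : L2ep (cst 0 : signal R n).
Proof. by move=> T T0; rewrite trunc_cst0; split; [exact: L2_cst0 | exact: aeW]. Qed.

Lemma l2norm_trunc_le {u} T : L2 u -> L2 (trunc T u) -> l2norm (trunc T u) <= l2norm u.
Proof.
move=> Lu LTu; rewrite ler_sqrt ?Rintegral_vsq_ge0 //.
apply: le_Rintegral => //; try exact: integrable_vsq.
by move=> t _; rewrite /trunc; case: ifP; rewrite ?vsq0 ?vsq_ge0.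
Qed.

Lemma l2norm_trunc0 {u} : L2ep u -> l2norm (trunc 0 u) = 0.
Proof.
move=> Lu; have [L0u neg0] := Lu 0 (lexx 0).
have ae_neq0 : {ae mu, forall t : R, t != 0}.
  exists [set 0]; split => //; first exact: lebesgue_measure_set1.
  by move=> t /= /negP /negbNE /eqP.
apply: l2norm_aeeq0; first exact: L2_measurable L0u.
apply: aeS2 neg0 ae_neq0 => t neg t_neq0; case: (ltgtP t 0) t_neq0 => // [/neg // | t_gt0 _].
by rewrite /trunc leNgt t_gt0.
Qed.

End Truncation.

Section CausalSystems.
Context {R : realType} {n : nat}.
Implicit Types (P : signal R n -> signal R n) (u : signal R n).

Lemma L2ep_system {P u} : is_system P -> L2ep u -> L2ep (P u).
Proof. by case=> _ PL2ep _ _; exact: PL2ep. Qed.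

Lemma causal_trunc_norm0 {P u T} : is_system P -> causal P -> L2ep u -> 0 <= T ->
  l2norm (trunc T u) = 0 -> l2norm (trunc T (P u)) = 0.
Proof.
case=> Pae PL2ep P0 _ Pcausal Lu T0 Tu0.
have Tu_ae0 := l2norm_eq0_ae (L2_trunc Lu T0) Tu0.
have PTu_ae0 : aeeq (P (trunc T u)) (cst 0).
  exact: aeeq_trans (Pae _ _ (L2ep_trunc Lu T0) L2ep_cst0 Tu_ae0) P0.
apply: l2norm_aeeq0; first exact: L2_measurable (L2_trunc (PL2ep _ Lu) T0).
apply: aeeq_trans (Pcausal T u T0 Lu) _.
by rewrite -(trunc_cst0 T); exact: trunc_aeeq.
Qed.

Lemma causal_stable_trunc_gain {P} : is_system P -> causal P -> stable P ->
  exists2 k, 0 <= k & forall u T, L2ep u -> 0 <= T ->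
    l2norm (trunc T (P u)) <= k * l2norm (trunc T u).
Proof.
move=> sP Pcausal [PL2p [c gain]].
exists (Num.max c 0) => [|u T Lu T0]; first by rewrite le_max lexx orbT.
have [Tu0 | Tu_neq0] := eqVneq (l2norm (trunc T u)) 0.
  by rewrite (causal_trunc_norm0 sP Pcausal Lu T0 Tu0) Tu0 mulr0.
have L_PTu := (PL2p _ (Lu T T0)).1.
have L_TPTu := L2_trunc (L2ep_system sP (L2ep_trunc Lu T0)) T0.
rewrite (eq_l2norm_ae (Pcausal T u T0 Lu)); last 2 first.
- exact: L2_measurable (L2_trunc (L2ep_system sP Lu) T0).
- exact: L2_measurable L_TPTu.
apply: le_trans (l2norm_trunc_le T L_PTu L_TPTu) _.
have Tu_gt0 : 0 < l2norm (trunc T u) by rewrite lt_neqAle eq_sym Tu_neq0 l2norm_ge0.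
have := gain _ (Lu T T0) Tu_neq0; rewrite ler_pdivrMr // => /le_trans; apply.
by rewrite ler_wpM2r ?l2norm_ge0 // le_max lexx.
Qed.

End CausalSystems.

Section SingularAngle.
Context {R : realType} {n : nat}.
Implicit Types (P : signal R n -> signal R n) (u : signal R n).

Definition angle_cosines P : set R :=
  [set r | exists u T, [/\ L2ep u, 0 < T, l2norm (trunc T u) != 0,
                               l2norm (trunc T (P u)) != 0 &
       r = l2inner (trunc T u) (trunc T (P u)) /
           (l2norm (trunc T u) * l2norm (trunc T (P u)))]].

Lemma cos_theta_eE P : cos_theta_e P = inf (angle_cosines P).
Proof. by []. Qed.

Lemma angle_cosines_bound {P r} : is_system P -> angle_cosines P r -> -1 <= r <= 1.
Proof.
move=> sP [u [T [Lu T_gt0 Nu NPu ->]]].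
have T0 := ltW T_gt0.
have N_gt0 : 0 < l2norm (trunc T u) * l2norm (trunc T (P u)).
  by rewrite mulr_gt0 // lt_neqAle eq_sym ?Nu ?NPu l2norm_ge0.
rewrite -ler_norml normrM normfV (gtr0_norm N_gt0) ler_pdivrMr // mul1r.
exact: l2_CauchySchwarz (L2_trunc Lu T0) (L2_trunc (L2ep_system sP Lu) T0).
Qed.

Lemma has_lbound_angle_cosines {P} : is_system P -> has_lbound (angle_cosines P).
Proof. by move=> sP; exists (-1) => r /(angle_cosines_bound sP) /andP[]. Qed.

Lemma cos_theta_e_bound {P} : is_system P -> -1 <= cos_theta_e P <= 1.
Proof.
move=> sP; rewrite cos_theta_eE.
have [->|/set0P[r Sr]] := eqVneq (angle_cosines P) set0.
  by rewrite inf0 lerN10 ler01.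
have /andP[r_ge r_le] := angle_cosines_bound sP Sr.
apply/andP; split.
  by apply: lb_le_inf; [exists r | move=> x /(angle_cosines_bound sP) /andP[]].
exact: le_trans (ge_inf (has_lbound_angle_cosines sP) Sr) r_le.
Qed.

Lemma cos_theta_e_le {P u T} : is_system P -> L2ep u -> 0 <= T ->
  cos_theta_e P * (l2norm (trunc T u) * l2norm (trunc T (P u)))
    <= l2inner (trunc T u) (trunc T (P u)).
Proof.
move=> sP Lu T0.
have CS := l2_CauchySchwarz (L2_trunc Lu T0) (L2_trunc (L2ep_system sP Lu) T0).
have [N0 | N_neq0] := eqVneq (l2norm (trunc T u) * l2norm (trunc T (P u))) 0.
  by move: CS; rewrite N0 mulr0 normr_le0 => /eqP ->.
have [Nu NPu] : l2norm (trunc T u) != 0 /\ l2norm (trunc T (P u)) != 0.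
  by split; apply: contra N_neq0 => /eqP ->; rewrite ?mul0r ?mulr0.
have T_gt0 : 0 < T.
  rewrite lt_neqAle T0 andbT; apply/eqP => T_eq0; move: Nu.
  by rewrite -T_eq0 l2norm_trunc0 ?eqxx.
have N_gt0 : 0 < l2norm (trunc T u) * l2norm (trunc T (P u)).
  by rewrite lt_neqAle eq_sym N_neq0 mulr_ge0 ?l2norm_ge0.
rewrite -ler_pdivlMr // cos_theta_eE; apply: ge_inf; first exact: has_lbound_angle_cosines.
by exists u, T; split.
Qed.

Lemma acos_add_lt_pi {p q : R} : -1 <= p <= 1 -> -1 <= q <= 1 ->
  acos p + acos q < pi -> 0 < p + q.
Proof.
move=> p_bd /andP[q_ge q_le] lt_pi.
have Nq_bd : -1 <= - q <= 1 by rewrite lerNr opprK q_le lerNl.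
have acos_p_in : acos p \in `[0, pi] by rewrite in_itv /= acos_ge0 // acos_lepi.
have acos_Nq_in : acos (- q) \in `[0, pi] by rewrite in_itv /= acos_ge0 // acos_lepi.
have : acos p < acos (- q) by rewrite acosN ?q_ge // ltrBrDr.
by rewrite -(ltr_cos acos_p_in acos_Nq_in) !acosK ?in_itv //= -ltrBlDr sub0r.
Qed.

End SingularAngle.

Section FeedbackLoop.
Context {R : realType} {n : nat}.
Context {P C : signal R n -> signal R n} {e1 u1 u2 : signal R n} {T : R}.
Hypotheses (sP : is_system P) (sC : is_system C) (Ccausal : causal C).
Hypotheses (Le1 : L2ep e1) (Lu1 : L2ep u1) (Lu2 : L2ep u2) (T0 : 0 <= T).
Hypotheses (loop1 : aeeq u1 (e1 \- C u2)) (loop2 : aeeq u2 (P u1)).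

Local Notation a := (trunc T u1).
Local Notation b := (trunc T u2).
Local Notation c := (trunc T (C u2)).
Local Notation e := (trunc T e1).

Let La : L2 a := L2_trunc Lu1 T0.
Let Lb : L2 b := L2_trunc Lu2 T0.
Let Lc : L2 c := L2_trunc (L2ep_system sC Lu2) T0.
Let Le : L2 e := L2_trunc Le1 T0.
Let LPa : L2 (trunc T (P u1)) := L2_trunc (L2ep_system sP Lu1) T0.

Let ma := L2_measurable La.
Let mb := L2_measurable Lb.
Let mc := L2_measurable Lc.
Let me := L2_measurable Le.
Let mPa := L2_measurable LPa.
Let mea := measurable_signalB me ma.
Let mec := measurable_signalB me mc.

Let a_ae : aeeq a (e \- c).
Proof. by rewrite -truncB; exact: trunc_aeeq. Qed.

Let b_ae : aeeq b (trunc T (P u1)).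
Proof. exact: trunc_aeeq. Qed.

Lemma loop_dist_norm_le : `|l2norm a - l2norm c| <= l2norm e.
Proof.
have c_ae : aeeq c (e \- a) by apply: aeS a_ae => t /= ->; rewrite opprB addrC subrK.
have := l2normB_le Le Lc; have := l2normB_le Le La.
by rewrite -(eq_l2norm_ae a_ae) // -(eq_l2norm_ae c_ae) // ler_norml; lra.
Qed.

Lemma loop_angle_bound : cos_theta_e P * l2norm a + cos_theta_e C * l2norm c <= l2norm e.
Proof.
have [b0 | b_neq0] := eqVneq (l2norm b) 0.
  have /andP[_ p_le1] := cos_theta_e_bound sP.
  have := loop_dist_norm_le; rewrite (causal_trunc_norm0 sC Ccausal Lu2 T0 b0).
  rewrite mulr0 addr0 subr0 (ger0_norm (l2norm_ge0 _)) => a_le.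
  by apply: le_trans a_le; rewrite ler_piMl ?l2norm_ge0.
have b_gt0 : 0 < l2norm b by rewrite lt_neqAle eq_sym b_neq0 l2norm_ge0.
have angleP := cos_theta_e_le sP Lu1 T0.
rewrite -(eq_l2norm_ae b_ae) // -(eq_l2inner_ae (aeeq_refl a) b_ae) // in angleP.
have angleC := cos_theta_e_le sC Lu2 T0.
have inner_ab : l2inner a b = l2inner e b - l2inner b c.
  by rewrite (eq_l2inner_ae a_ae (aeeq_refl b)) ?l2innerBl ?(l2innerC c).
have inner_eb := le_trans (ler_norm _) (l2_CauchySchwarz Le Lb).
by rewrite -(ler_pM2r b_gt0) mulrDl; nra.
Qed.

Lemma loop_trunc_bound : (cos_theta_e P + cos_theta_e C) * l2norm a <= 2 * l2norm e.
Proof.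
have /andP[q_ge q_le] := cos_theta_e_bound sC.
have q_norm : `|cos_theta_e C| <= 1 by rewrite ler_norml q_ge q_le.
have := mul_le_add_dist q_norm loop_dist_norm_le.
have := loop_angle_bound; rewrite mulrDl; lra.
Qed.

End FeedbackLoop.

Theorem corollary5 (R : realType) (n : nat) (P C : signal R n -> signal R n) :
  is_system P -> causal P -> stable P ->
  is_system C -> causal C -> stable C ->
  well_posed P C ->
  theta_e P + theta_e C < pi ->
  loop_e2_0_stable P C.
Proof.
move=> sP Pcausal Pstable sC Ccausal _ _ angle_lt_pi.
have pq_gt0 := acos_add_lt_pi (cos_theta_e_bound sP) (cos_theta_e_bound sC) angle_lt_pi.
have [k k_ge0 gainP] := causal_stable_trunc_gain sP Pcausal Pstable.
exists ((1 + k) * (2 / (cos_theta_e P + cos_theta_e C))).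
  by rewrite mulr_gt0 ?divr_gt0 // ltr_pwDl.
move=> e1 u1 u2 T Le1 Lu1 Lu2 T0 loop1 loop2.
have a_le : l2norm (trunc T u1) <= 2 / (cos_theta_e P + cos_theta_e C) * l2norm (trunc T e1).
  rewrite mulrAC ler_pdivlMr // mulrC.
  exact: loop_trunc_bound sP sC Ccausal Le1 Lu1 Lu2 T0 loop1 loop2.
have b_le : l2norm (trunc T u2) <= k * l2norm (trunc T u1).
  rewrite (eq_l2norm_ae (trunc_aeeq T loop2)); first exact: gainP.
  - exact: L2_measurable (L2_trunc Lu2 T0).
  - exact: L2_measurable (L2_trunc (L2ep_system sP Lu1) T0).
apply: le_trans (sqrt_sqrD_le (l2norm_ge0 _) (l2norm_ge0 _)) _.
have := ler_wpM2l (addr_ge0 ler01 k_ge0) a_le; rewrite mulrA; nra.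
Qed.
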